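(* Let $\mathcal{B}\subseteq\mathcal{C}^n$. Then for every $k\in\mathbb{N}$, every $R\in\mathbb{R}^{n\times k}$ and every $f\in\mathbb{R}^n\setminus\mathbb{Z}^n$, one has $C_{\mathcal{B}}(R,f)=C_{\operatorname{cl}_f(\mathcal{B}_f)}(R,f)$.
   Context: $\mathcal{C}^n$ is the family of all $n$-dimensional closed convex subsets of $\mathbb{R}^n$; $\mathcal{C}^n_f$ is the subfamily containing $f$ in the interior, and $\mathcal{B}_f=\mathcal{B}\cap\mathcal{C}^n_f$. For $B\in\mathcal{C}^n$ with $0\in\operatorname{int}(B)$, $\psi_B(r)=\inf\{\lambda>0:r\in\lambda B\}$. For $R=(r_1,\dots,r_k)$ and $B\in\mathcal{C}^n$: if $f\in\operatorname{int}(B)$, $C_B(R,f)=\{s\in\mathbb{R}^k_{\ge0}:\sum_j s_j\psi_{B-f}(r_j)\ge1\}$, otherwise $C_B(R,f)=\mathbb{R}^k_{\ge0}$; $C_{\mathcal{B}}(R,f)=\bigcap_{B\in\mathcal{B}}C_B(R,f)$ ($=\mathbb{R}^k_{\ge0}$ if the family is empty). The polar of $X$ is $X^\circ=\{r:r\cdot x\le1\ \forall x\in X\}$; the $f$-metric on $\mathcal{C}^n_f$ is $d_f(B_1,B_2)=d_H((B_1-f)^\circ,(B_2-f)^\circ)$ with $d_H$ the Hausdorff metric; $\operatorname{cl}_f(\mathcal{A})$ denotes the closure of $\mathcal{A}\subseteq\mathcal{C}^n_f$ in $\mathcal{C}^n_f$ with respect to $d_f$. *)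

From HB Require Import structures.
From mathcomp Require Import all_boot all_order all_algebra.
From mathcomp Require Import all_classical all_reals.
From mathcomp Require Import ereal.
Set Implicit Arguments. Unset Strict Implicit. Unset Printing Implicit Defensive.
Import Order.TTheory GRing.Theory Num.Theory.
Local Open Scope classical_set_scope.
Local Open Scope ring_scope.

Section Defs.
Variables (R : realType) (n : nat).
Notation vec := 'cV[R]_n.

Definition dotv (u v : vec) : R := \sum_(i < n) u i 0 * v i 0.
Definition distv (u v : vec) : R := Num.sqrt (dotv (u - v) (u - v)).

Definition interior_pt (B : set vec) (x : vec) : Prop :=
  exists2 e : R, 0 < e & forall y, distv y x < e -> B y.
Definition closed_set (B : set vec) : Prop :=
  forall x, (forall e : R, 0 < e -> exists2 y, B y & distv y x < e) -> B x.
Definition convex_set (B : set vec) : Prop :=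
  forall x y (t : R), B x -> B y -> 0 <= t <= 1 -> B ((1 - t) *: x + t *: y).
(* n-dimensional: the affine hull of B is all of R^n *)
Definition full_dim (B : set vec) : Prop :=
  forall x : vec, exists (m : nat) (p : 'I_m -> vec) (l : 'I_m -> R),
    (forall i, B (p i)) /\ \sum_(i < m) l i = 1 /\ x = \sum_(i < m) l i *: p i.

Definition Cn : set (set vec) :=
  [set B | closed_set B /\ convex_set B /\ full_dim B].
Definition Cnf (f : vec) : set (set vec) := [set B | Cn B /\ interior_pt B f].

Definition translate (B : set vec) (f : vec) : set vec := [set b - f | b in B].

Definition gauge (B : set vec) (r : vec) : R :=
  inf [set lam : R | 0 < lam /\ exists2 b, B b & r = lam *: b].

Definition nonnegv (k : nat) (s : 'cV[R]_k) : Prop := forall j, 0 <= s j 0.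

Definition CB (k : nat) (B : set vec) (Rm : 'M[R]_(n, k)) (f : vec) : set 'cV[R]_k :=
  [set s | nonnegv s /\
     (interior_pt B f ->
        1 <= \sum_(j < k) s j 0 * gauge (translate B f) (col j Rm))].

(* C_calB(R,f) = intersection (R^k_{>=0} if the family is empty) *)
Definition CBfam (k : nat) (F : set (set vec)) (Rm : 'M[R]_(n, k)) (f : vec)
  : set 'cV[R]_k :=
  [set s | nonnegv s /\ forall B, F B -> CB B Rm f s].

Definition polar (X : set vec) : set vec := [set r | forall x, X x -> dotv r x <= 1].

Definition edist_set (x : vec) (Y : set vec) : \bar R :=
  ereal_inf [set (distv x y)%:E | y in Y].
Definition hausdorff (X Y : set vec) : \bar R :=
  maxe (ereal_sup [set edist_set x Y | x in X])
       (ereal_sup [set edist_set y X | y in Y]).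

Definition fmetric (f : vec) (B1 B2 : set vec) : \bar R :=
  hausdorff (polar (translate B1 f)) (polar (translate B2 f)).

Definition clf (f : vec) (A : set (set vec)) : set (set vec) :=
  [set B | Cnf f B /\
     forall e : R, 0 < e -> exists2 A0, A A0 & (fmetric f B A0 < e%:E)%E].

Definition integral_vec (f : vec) : Prop :=
  forall i, exists z : int, f i 0 = z%:~R.

End Defs.

From HB Require Import structures.
From mathcomp Require Import all_boot all_order all_algebra.
From mathcomp Require Import all_classical all_reals.
From mathcomp Require Import ereal.
From mathcomp Require Import ring lra.
Set Implicit Arguments. Unset Strict Implicit. Unset Printing Implicit Defensive.
Import Order.TTheory GRing.Theory Num.Theory.
Local Open Scope classical_set_scope.
Local Open Scope ring_scope.

(** For [B] with [f] in its interior, the gauge of [B - f] is the support function of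
    the polar of [B - f]: one inequality is immediate, the other is the separation
    theorem, obtained from the nearest point of a closed convex set.  Hence if
    [d_f(B, A) < e], every point of the polar of [A - f] is [e]-close to a point of the
    polar of [B - f], and [psi_(A-f)(r) <= psi_(B-f)(r) + e (1 + |r|^2) / 2].  The
    inequalities defining [C_A(R, f)] for the members [A] of [B_f] therefore pass to
    their [d_f]-limits.  Conversely [B_f] lies in its own closure, and members of [B]
    without [f] in their interior impose no constraint. *)

Section Dotv.
Variables (R : realType) (n : nat).
Notation vec := 'cV[R]_n.
Notation N x := (dotv x x).
Implicit Types u v w x y z : vec.

Lemma dotvC u v : dotv u v = dotv v u.
Proof. by apply: eq_bigr => i _; rewrite mulrC. Qed.

Lemma dotvDl u v w : dotv (u + v) w = dotv u w + dotv v w.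
Proof. by rewrite /dotv -big_split; apply: eq_bigr => i _; rewrite !mxE mulrDl. Qed.

Lemma dotvZl a u w : dotv (a *: u) w = a * dotv u w.
Proof. by rewrite /dotv mulr_sumr; apply: eq_bigr => i _; rewrite !mxE mulrA. Qed.

Lemma dotvBl u v w : dotv (u - v) w = dotv u w - dotv v w.
Proof. by rewrite dotvDl -scaleN1r dotvZl mulN1r. Qed.

Lemma dotvDr u v w : dotv w (u + v) = dotv w u + dotv w v.
Proof. by rewrite !(dotvC w) dotvDl. Qed.

Lemma dotvZr a u w : dotv w (a *: u) = a * dotv w u.
Proof. by rewrite !(dotvC w) dotvZl. Qed.

Lemma dotvBr u v w : dotv w (u - v) = dotv w u - dotv w v.
Proof. by rewrite !(dotvC w) dotvBl. Qed.

Lemma dotv0r u : dotv u 0 = 0.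
Proof. by rewrite /dotv big1 // => i _; rewrite mxE mulr0. Qed.

Lemma dotvv_ge0 u : 0 <= N u.
Proof. by rewrite /dotv sumr_ge0 // => i _; rewrite -expr2 sqr_ge0. Qed.

Lemma dotvv_gt0 u : u != 0 -> 0 < N u.
Proof.
apply: contraNT; rewrite -leNgt => Nu_le0; apply/eqP/matrixP => i j.
have : N u == 0 by rewrite eq_le Nu_le0 dotvv_ge0.
rewrite psumr_eq0.
  by move=> /allP/(_ i (mem_index_enum i)); rewrite mulf_eq0 orbb (ord1 j) mxE => /eqP.
by move=> l _; rewrite -expr2 sqr_ge0.
Qed.

Lemma sqr_coord_le_dotvv u i : u i 0 ^+ 2 <= N u.
Proof.
rewrite /dotv (bigD1 i) //= expr2 lerDl sumr_ge0 // => l _.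
by rewrite -expr2 sqr_ge0.
Qed.

Lemma dotvv_le_coord_bound u c : (forall i, `|u i 0| <= c) -> N u <= n%:R * c ^+ 2.
Proof.
move=> uc; have -> : n%:R * c ^+ 2 = \sum_(i < n) c ^+ 2.
  by rewrite sumr_const card_ord mulr_natl.
apply: ler_sum => i _; rewrite -expr2 -real_normK ?num_real //.
by rewrite lerXn2r ?nnegrE ?(le_trans _ (uc i)).
Qed.

Lemma dotvvD u v : N (u + v) = N u + 2 * dotv u v + N v.
Proof. by rewrite dotvDl !dotvDr (dotvC v u); ring. Qed.

Lemma dotv_young l u v : 0 < l -> 2 * dotv u v <= l * N u + N v / l.
Proof.
move=> l0; rewrite /dotv !mulr_sumr mulr_suml -big_split /=.
apply: ler_sum => i _; set a := u i 0; set b := v i 0.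
have : 0 <= (l * a - b) ^+ 2 / l by rewrite divr_ge0 ?sqr_ge0 ?ltW.
have -> : (l * a - b) ^+ 2 / l = l * (a * a) + b * b / l - 2 * (a * b).
  by field; rewrite gt_eqF.
by rewrite subr_ge0.
Qed.

Lemma dotvvD_le l u v : 0 < l -> N (u + v) <= (1 + l) * N u + (1 + l^-1) * N v.
Proof. by move=> l0; have := dotv_young u v l0; rewrite dotvvD; lra. Qed.

Lemma dotvv_midpoint x y z :
  N (x - y) + 4 * N (z - ((1 - 2^-1) *: x + 2^-1 *: y)) = 2 * N (z - x) + 2 * N (z - y).
Proof.
rewrite /dotv !mulr_sumr -!big_split /=; apply: eq_bigr => i _; rewrite !mxE.
by field.
Qed.

Lemma dotvv_segment z p a t :
  N (z - ((1 - t) *: p + t *: a)) = N (z - p) - 2 * t * dotv (z - p) (a - p) + t ^+ 2 * N (a - p).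
Proof.
rewrite /dotv !mulr_sumr -sumrB -big_split /=; apply: eq_bigr => i _; rewrite !mxE.
ring.
Qed.

Lemma distv_ltE x y e : 0 < e -> (distv x y < e) = (N (x - y) < e ^+ 2).
Proof.
move=> e0; rewrite /distv -[in LHS](gtr0_norm e0) -sqrtr_sqr.
by rewrite ltr_sqrt ?exprn_gt0.
Qed.

End Dotv.

Section RealBounds.
Variable R : realType.

Definition inv_succ (k : nat) : R := k.+1%:R^-1.

Lemma inv_succ_gt0 k : 0 < inv_succ k.
Proof. by rewrite invr_gt0 ltr0Sn. Qed.

Lemma inv_succ_le1 k : inv_succ k <= 1.
Proof. by rewrite invf_le1 ?ler1n ?ltr0Sn. Qed.

Lemma inv_succ_sqr_le k : inv_succ k ^+ 2 <= inv_succ k.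
Proof. by rewrite expr2 ger_pMr ?inv_succ_gt0 ?inv_succ_le1. Qed.

Lemma inv_succ_le k m : (k <= m)%N -> inv_succ m <= inv_succ k.
Proof. by move=> km; rewrite lef_pV2 ?posrE ?ltr0Sn // ler_nat. Qed.

Lemma inv_succ_small (K e : R) : 0 < e -> exists k, K * inv_succ k < e.
Proof.
move=> e0; have Ke_ge0 : 0 <= `|K| / e by rewrite divr_ge0 // ltW.
exists (Num.bound (`|K| / e)); have := archi_boundP Ke_ge0.
set b := Num.bound _ => Kb.
rewrite ltr_pdivrMr ?ltr0Sn // (le_lt_trans (ler_norm K)) //.
by rewrite -ltr_pdivrMl // mulrC (lt_le_trans Kb) // ler_nat.
Qed.

Lemma le_of_le_add_inv_succ (x y K : R) : (forall k, x <= y + K * inv_succ k) -> x <= y.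
Proof.
move=> xy; apply/ler_addgt0Pr => e e0; have [k Kk] := inv_succ_small K e0.
by apply: le_trans (xy k) _; rewrite lerD2l ltW.
Qed.

Lemma le_of_le_addMr (x y M : R) : 0 <= M -> (forall e, 0 < e -> x <= y + e * M) -> x <= y.
Proof.
move=> M0 xy; apply/ler_addgt0Pr => d d0; have M1 : 0 < M + 1 by lra.
apply: le_trans (xy _ (divr_gt0 d0 M1)) _; rewrite lerD2l mulrAC ler_pdivrMr //.
by rewrite ler_pM2l //; lra.
Qed.

(* Completeness of [R], through the infimum of the upper estimates [u m + c m]. *)
Lemma cauchy_lim (u c : nat -> R) :
  (forall k, 0 <= c k) ->
  (forall k m, (k <= m)%N -> `|u k - u m| <= c k) ->
  exists L, forall k, `|u k - L| <= c k.
Proof.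
move=> c0 uc; pose S := [set u m + c m | m in [set: nat]].
have S0 : S !=set0 by exists (u 0%N + c 0%N); exists 0%N.
have S_lb k : lbound S (u k - c k).
  move=> _ [m _ <-]; case: (leqP k m) => [km|/ltnW mk].
    by have := uc k m km; have := c0 m; rewrite ler_norml; lra.
  by have := uc m k mk; have := c0 k; rewrite ler_norml; lra.
exists (inf S) => k; rewrite ler_norml; apply/andP; split.
  have : inf S <= u k + c k by apply: ge_inf; [exists (u k - c k)|exists k].
  lra.
by have := lb_le_inf S0 (S_lb k); lra.
Qed.

End RealBounds.

Section ConvexProjection.
Variables (R : realType) (n : nat).
Notation vec := 'cV[R]_n.
Notation N x := (dotv x x).
Implicit Types (C : set vec) (a b p y z : vec).

Lemma vec_cauchy_lim (a : nat -> vec) (c : nat -> R) :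
  (forall k, 0 <= c k) ->
  (forall k m, (k <= m)%N -> N (a k - a m) <= c k ^+ 2) ->
  exists p, forall k, N (a k - p) <= n%:R * c k ^+ 2.
Proof.
move=> c0 ac.
have coord_cauchy i k m : (k <= m)%N -> `|a k i 0 - a m i 0| <= c k.
  move=> km; have := le_trans (sqr_coord_le_dotvv (a k - a m) i) (ac k m km).
  by rewrite !mxE => h; rewrite -ler_sqr ?nnegrE // real_normK ?num_real.
have [L aL] := choice (fun i => cauchy_lim c0 (coord_cauchy i)).
by exists (\col_i L i) => k; apply: dotvv_le_coord_bound => i; rewrite !mxE.
Qed.

Lemma closed_set_lim C (a : nat -> vec) p (K : R) : closed_set C -> 0 <= K ->
  (forall k, C (a k)) -> (forall k, N (a k - p) <= K * inv_succ R k ^+ 2) -> C p.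
Proof.
move=> Ccl K0 Ca ap; apply: Ccl => e e0.
have [k Kk] := inv_succ_small K (exprn_gt0 2 e0).
exists (a k); rewrite ?distv_ltE // (le_lt_trans (ap k)) // (le_lt_trans _ Kk) //.
by rewrite ler_wpM2l ?inv_succ_sqr_le.
Qed.

Lemma lim_dotvv_le z p (a : nat -> vec) (D K : R) : 0 <= D -> 0 <= K ->
  (forall k, N (z - a k) <= D + inv_succ R k ^+ 2) ->
  (forall k, N (a k - p) <= K * inv_succ R k ^+ 2) -> N (z - p) <= D.
Proof.
move=> D0 K0 za ap; apply: (@le_of_le_add_inv_succ _ _ _ (D + 2 + 2 * K)) => k.
have -> : z - p = (z - a k) + (a k - p) by rewrite addrA subrK.
have w0 := inv_succ_gt0 R k; have w1 := inv_succ_le1 R k.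
have w2 := inv_succ_sqr_le R k.
have zak : N (z - a k) <= D + inv_succ R k by rewrite (le_trans (za k)) ?lerD2l.
have ap' : N (a k - p) <= K * inv_succ R k by rewrite (le_trans (ap k)) ?ler_wpM2l.
have ap'' : (inv_succ R k)^-1 * N (a k - p) <= K * inv_succ R k.
  by rewrite mulrC ler_pdivrMr // (le_trans (ap k)) // expr2 mulrA.
apply: le_trans (dotvvD_le _ _ w0) _; rewrite [(1 + _^-1) * _]mulrDl mul1r.
move: zak ap' ap'' w0 w1; set w := inv_succ R k; nra.
Qed.

Lemma near_minimizers_close C z a b (D eps : R) : convex_set C ->
  (forall c, C c -> D <= N (z - c)) -> C a -> C b ->
  N (z - a) <= D + eps -> N (z - b) <= D + eps -> N (a - b) <= 4 * eps.
Proof.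
move=> Ccv D_le Ca Cb za zb.
have half01 : (0 <= 2^-1 :> R) && (2^-1 <= 1 :> R).
  by rewrite invr_ge0 ler0n invf_le1 ?ltr0n ?ler1n.
have := D_le _ (Ccv _ _ _ Ca Cb half01); have := dotvv_midpoint a b z.
lra.
Qed.

Lemma nearest_point C z : closed_set C -> convex_set C -> C !=set0 ->
  exists2 p, C p & forall a, C a -> N (z - p) <= N (z - a).
Proof.
move=> Ccl Ccv [a0 Ca0]; pose S := [set N (z - a) | a in C].
have S0 : S !=set0 by exists (N (z - a0)), a0.
have S_lb : has_lbound S by exists 0 => _ [a _ <-]; exact: dotvv_ge0.
pose D := inf S.
have D_le a : C a -> D <= N (z - a) by move=> Ca; apply: ge_inf => //; exists a.
have D0 : 0 <= D by apply: lb_le_inf => // _ [a _ <-]; exact: dotvv_ge0.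
have almost_min k : exists a, C a /\ N (z - a) <= D + inv_succ R k ^+ 2.
  have /(inf_lt S0) [_ [a Ca <-] za] : D < D + inv_succ R k ^+ 2.
    by rewrite ltrDl exprn_gt0 // inv_succ_gt0.
  by exists a; split; last exact: ltW.
have [a aP] := choice almost_min.
have [Ca za] : (forall k, C (a k)) /\ (forall k, N (z - a k) <= D + inv_succ R k ^+ 2).
  by split=> k; case: (aP k).
have a_cauchy k m : (k <= m)%N -> N (a k - a m) <= (2 * inv_succ R k) ^+ 2.
  move=> km; rewrite exprMn [2 ^+ 2]expr2 -natrM.
  apply: near_minimizers_close Ccv D_le (Ca k) (Ca m) (za k) (le_trans (za m) _).
  by rewrite lerD2l ler_sqr ?nnegrE ?(ltW (inv_succ_gt0 _ _)) ?inv_succ_le.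
have c_ge0 k : 0 <= 2 * inv_succ R k by rewrite mulr_ge0 ?ltW ?inv_succ_gt0.
have [p ap] := vec_cauchy_lim c_ge0 a_cauchy.
have ap' k : N (a k - p) <= 4 * n%:R * inv_succ R k ^+ 2.
  by have := ap k; rewrite exprMn; lra.
have K0 : 0 <= 4 * n%:R :> R by rewrite mulr_ge0.
exists p; first exact: closed_set_lim Ccl K0 Ca ap'.
by move=> b Cb; apply: le_trans (D_le b Cb); exact: lim_dotvv_le D0 K0 za ap'.
Qed.

Lemma nearest_point_obtuse C z p : convex_set C -> C p ->
  (forall a, C a -> N (z - p) <= N (z - a)) -> forall a, C a -> dotv (z - p) (a - p) <= 0.
Proof.
move=> Ccv Cp pmin a Ca; rewrite leNgt; apply/negP => d0.
set d := dotv (z - p) (a - p) in d0; set M := N (a - p).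
have M0 : 0 <= M by exact: dotvv_ge0.
pose t := d / (d + M).
have dM0 : 0 < d + M by lra.
have t0 : 0 < t by rewrite divr_gt0.
have t1 : t <= 1 by rewrite ler_pdivrMr // mul1r; lra.
have tdM : t * (d + M) = d by rewrite divfK // gt_eqF.
have t01 : (0 <= t) && (t <= 1) by rewrite t1 ltW.
have := pmin _ (Ccv _ _ _ Cp Ca t01); rewrite dotvv_segment -/d -/M expr2.
nra.
Qed.

Lemma separation C z : closed_set C -> convex_set C -> C 0 -> ~ C z ->
  exists2 y, polar C y & 1 < dotv y z.
Proof.
move=> Ccl Ccv C0 Cz; have [p Cp pmin] := nearest_point z Ccl Ccv (ex_intro _ 0 C0).
have obtuse := nearest_point_obtuse Ccv Cp pmin.
pose y := z - p; pose c := dotv y p.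
have yC a : C a -> dotv y a <= c by move=> /obtuse; rewrite dotvBr subr_le0.
have c0 : 0 <= c by have := yC 0 C0; rewrite dotv0r.
have y0 : 0 < N y by apply: dotvv_gt0; rewrite subr_eq0; apply/eqP => zp; apply: Cz; rewrite zp.
have yz : dotv y z = c + N y by rewrite /c {3}/y dotvBr; ring.
have cz : 0 < c + dotv y z by lra.
exists ((2 / (c + dotv y z)) *: y) => [a Ca|]; rewrite dotvZl mulrAC.
  by rewrite ler_pdivrMr // mul1r; have := yC a Ca; lra.
by rewrite ltr_pdivlMr // mul1r; lra.
Qed.

End ConvexProjection.

Section Gauge.
Variables (R : realType) (n : nat).
Notation vec := 'cV[R]_n.
Notation N x := (dotv x x).
Implicit Types (A B X Y : set vec) (f r x y : vec).

Lemma translate_closed A f : closed_set A -> closed_set (translate A f).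
Proof.
move=> Acl x x_adh; exists (x + f); last by rewrite addrK.
apply: Acl => e e0; have [_ [b Ab <-] bx] := x_adh e e0.
by exists b; rewrite // /distv opprD addrA (addrAC b) in bx *.
Qed.

Lemma translate_convex A f : convex_set A -> convex_set (translate A f).
Proof.
move=> Acv _ _ t [b1 Ab1 <-] [b2 Ab2 <-] t01.
exists ((1 - t) *: b1 + t *: b2); first exact: Acv.
by apply/matrixP => i j; rewrite !mxE; ring.
Qed.

Lemma interior_translate0 A f : interior_pt A f -> translate A f 0.
Proof.
move=> [e e0 Ae]; exists f; last by rewrite subrr.
by apply: Ae; rewrite distv_ltE // subrr dotv0r exprn_gt0.
Qed.

Definition gauge_set X r : set R := [set lam | 0 < lam /\ exists2 b, X b & r = lam *: b].

Lemma gauge_set_neq0 A f r : interior_pt A f -> gauge_set (translate A f) r !=set0.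
Proof.
move=> [e e0 Ae]; have Nr0 := dotvv_ge0 r.
pose lam := (N r + 1) / e; have lam0 : 0 < lam by rewrite divr_gt0 //; lra.
exists lam; split => //; exists (lam^-1 *: r); last first.
  by rewrite scalerA mulfV ?gt_eqF // scale1r.
exists (lam^-1 *: r + f); last by rewrite addrK.
apply: Ae; rewrite distv_ltE // addrK dotvZl dotvZr invf_div.
have -> : e / (N r + 1) * (e / (N r + 1) * N r) = e ^+ 2 * (N r / (N r + 1) ^+ 2).
  by field; lra.
rewrite gtr_pMr ?exprn_gt0 // ltr_pdivrMr ?exprn_gt0 ?mul1r ?expr2; nra.
Qed.

Lemma gauge_ge0 A f r : interior_pt A f -> 0 <= gauge (translate A f) r.
Proof. by move=> Af; apply: lb_le_inf; [exact: gauge_set_neq0 | move=> x [/ltW]]. Qed.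

Lemma polar_dotv_le_gauge A f y r : interior_pt A f ->
  polar (translate A f) y -> dotv y r <= gauge (translate A f) r.
Proof.
move=> Af yA; apply: lb_le_inf; first exact: gauge_set_neq0.
by move=> lam [lam0 [b Ab ->]]; rewrite dotvZr ger_pMr // yA.
Qed.

(* With [polar_dotv_le_gauge]: the gauge of [A - f] is the support function of its polar. *)
Lemma gauge_lt_polar A f r mu : closed_set A -> convex_set A -> interior_pt A f ->
  0 < mu -> mu < gauge (translate A f) r ->
  exists2 y, polar (translate A f) y & mu < dotv y r.
Proof.
move=> Acl Acv Af mu0 mu_lt; have rA : ~ translate A f (mu^-1 *: r).
  move=> rA; suff : gauge (translate A f) r <= mu by lra.
  apply: ge_inf; first by exists 0 => x [/ltW].
  by split => //; exists (mu^-1 *: r); rewrite // scalerA mulfV ?gt_eqF // scale1r.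
have [y yA yr] := separation (translate_closed (f:=f) Acl) (translate_convex (f:=f) Acv)
  (interior_translate0 Af) rA.
by exists y => //; move: yr; rewrite dotvZr mulrC ltr_pdivlMr // mul1r.
Qed.

Lemma hausdorff_lt_near X Y y (e : R) :
  (hausdorff X Y < e%:E)%E -> Y y -> exists2 x, X x & distv y x < e.
Proof.
rewrite /hausdorff gt_max => /andP[_ XY] Yy.
have /ereal_inf_lt [_ [x Xx <-]] : (edist_set y X < e%:E)%E.
  by apply: le_lt_trans XY; apply: ereal_sup_ubound; exists y.
by rewrite lte_fin; exists x.
Qed.

(* AM-GM replaces the Cauchy-Schwarz bound [|r| e] by [e (1 + |r|^2) / 2], avoiding square roots. *)
Lemma dotv_lt_distv y y' r (e : R) : 0 < e -> distv y y' < e ->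
  dotv (y - y') r < e * ((1 + N r) / 2).
Proof.
move=> e0; rewrite distv_ltE // => yy'.
have ie0 : 0 < e^-1 by rewrite invr_gt0.
have := dotv_young (y - y') r ie0; rewrite invrK.
have : e^-1 * N (y - y') < e by rewrite mulrC ltr_pdivrMr // -expr2.
have -> : e * ((1 + N r) / 2) = (e + N r * e) / 2 by field.
lra.
Qed.

Lemma gauge_le_fmetric A B f r (e : R) :
  closed_set A -> convex_set A -> interior_pt A f -> interior_pt B f ->
  0 < e -> (fmetric f B A < e%:E)%E ->
  gauge (translate A f) r <= gauge (translate B f) r + e * ((1 + N r) / 2).
Proof.
move=> Acl Acv Af Bf e0 BA.
set c := _ + _; have c0 : 0 < c.
  rewrite ltr_pwDr ?gauge_ge0 // mulr_gt0 // divr_gt0 //.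
  by have := dotvv_ge0 r; lra.
have gauge_A_le mu : 0 < mu -> mu < gauge (translate A f) r -> mu < c.
  move=> mu0 /(gauge_lt_polar Acl Acv Af mu0) [y yA yr].
  have [y' y'B yy'] := hausdorff_lt_near BA yA.
  have := polar_dotv_le_gauge r Bf y'B; have := dotv_lt_distv r e0 yy'.
  by rewrite dotvBl /c; lra.
rewrite leNgt; apply/negP => c_lt.
have := gauge_A_le ((c + gauge (translate A f) r) / 2); lra.
Qed.

Lemma fmetric_self_le0 f B : (fmetric f B B <= 0)%E.
Proof.
rewrite /fmetric /hausdorff maxxx; apply: ge_ereal_sup => _ [x Bx <-].
apply: ge_ereal_inf; exists (distv x x)%:E; first by exists x.
by rewrite /distv subrr dotv0r sqrtr0.
Qed.

End Gauge.

Section ClosureCone.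
Variables (R : realType) (n k : nat) (Rm : 'M[R]_(n, k)) (f : 'cV[R]_n).

Lemma CB_clf (F : set (set 'cV[R]_n)) B s : F `<=` Cnf f -> clf f F B ->
  nonnegv s -> (forall A, F A -> CB A Rm f s) -> CB B Rm f s.
Proof.
move=> FC [_ BF] s0 FCB; split => // Bf.
pose M := \sum_(j < k) s j 0 * ((1 + dotv (col j Rm) (col j Rm)) / 2).
have M0 : 0 <= M.
  apply: sumr_ge0 => j _; rewrite mulr_ge0 ?divr_ge0 ?addr_ge0 ?dotvv_ge0 //.
apply: (le_of_le_addMr M0) => e e0; have [A FA BA] := BF e e0.
have [[[Acl [Acv _]] Af] [_ ]] := (FC A FA, FCB A FA).
move/(_ Af)/le_trans; apply; rewrite mulr_sumr -big_split /=.
apply: ler_sum => j _; rewrite mulrCA -mulrDr ler_wpM2l //.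
exact: gauge_le_fmetric.
Qed.

Lemma sub_clf (F : set (set 'cV[R]_n)) : F `<=` Cnf f -> F `<=` clf f F.
Proof.
move=> FC B FB; split; first exact: FC.
by move=> e e0; exists B => //; rewrite (le_lt_trans (fmetric_self_le0 f B)) ?lte_fin.
Qed.

End ClosureCone.

Theorem proposition3p8 (R : realType) (n : nat) (calB : set (set 'cV[R]_n))
  (hB : calB `<=` Cn (n:=n)) :
  forall (k : nat) (Rm : 'M[R]_(n, k)) (f : 'cV[R]_n),
    ~ integral_vec f ->
    CBfam calB Rm f = CBfam (clf f (calB `&` Cnf f)) Rm f.
Proof.
move=> k Rm f _; have calBf_sub : calB `&` Cnf f `<=` Cnf f by move=> B [].
apply/seteqP; split => s [s0 sB]; split => // B.
  by move=> /(CB_clf calBf_sub); apply=> // A [/sB].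
move=> calB_B; split => // Bf.
have calBf_B : (calB `&` Cnf f) B by split=> //; split=> //; exact: hB.
by have [_] := sB B (sub_clf calBf_sub calBf_B); apply.
Qed.
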